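(* For every pure context $F$, term $t$ and variable $x\notin\mathrm{fv}(F)$, we have $\langle (\lambda x.\langle F[x]\rangle)\,t\rangle \sim \langle F[t]\rangle$.
   Context: The calculus $\lambda_{\mathcal S}$. Terms: $t ::= x \mid \lambda x.t \mid t\,t \mid \mathcal{S}k.t \mid \langle t\rangle$ (shift and reset); values: $v ::= \lambda x.t \mid x$. $\lambda x.t$ binds $x$, $\mathcal{S}k.t$ binds $k$; terms up to $\alpha$-conversion; $\mathrm{fv}$ free variables; capture-avoiding substitution $t\{v/x\}$. Pure contexts $F ::= [\,] \mid v\,F \mid F\,t$; evaluation contexts $E ::= [\,] \mid v\,E \mid E\,t \mid \langle E\rangle$. Reduction: $E[(\lambda x.t)\,v] \to E[t\{v/x\}]$; $E[\langle F[\mathcal{S}k.t]\rangle] \to E[\langle t\{\lambda x.\langle F[x]\rangle/k\}\rangle]$ ($x\notin\mathrm{fv}(F)$); $E[\langle v\rangle]\to E[v]$. $t\Downarrow t'$ iff $t\to^*t'$ and $t'$ irreducible. Normal forms: values, control stuck terms $F[\mathcal{S}k.t]$, open stuck terms $E[x\,v]$. Fresh: not free in the terms/contexts considered. Normal form bisimilarity $\sim$: for a relation $\mathcal R$ on terms, $E_0\mathrel{\mathcal R}E_1$ iff either $E_0=E_0'[\langle F_0\rangle]$, $E_1=E_1'[\langle F_1\rangle]$ ($F_i$ pure) with $E_0'[x]\mathrel{\mathcal R}E_1'[x]$ and $\langle F_0[x]\rangle\mathrel{\mathcal R}\langle F_1[x]\rangle$ ($x$ fresh), or $E_0=F_0$,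 $E_1=F_1$ pure with $F_0[x]\mathrel{\mathcal R}F_1[x]$ ($x$ fresh). $v\mathbin{@}y$ is $x\,y$ if $v=x$, $t\{y/x\}$ if $v=\lambda x.t$. $\mathcal R^{\mathrm{nf}}$ on normal forms: $v_0\mathrel{\mathcal R^{\mathrm{nf}}}v_1$ if $v_0\mathbin{@}x\mathrel{\mathcal R}v_1\mathbin{@}x$ ($x$ fresh); $F_0[\mathcal{S}k.t_0]\mathrel{\mathcal R^{\mathrm{nf}}}F_1[\mathcal{S}k.t_1]$ if $F_0\mathrel{\mathcal R}F_1$ and $\langle t_0\rangle\mathrel{\mathcal R}\langle t_1\rangle$; $E_0[x\,v_0]\mathrel{\mathcal R^{\mathrm{nf}}}E_1[x\,v_1]$ if $E_0\mathrel{\mathcal R}E_1$ and $v_0\mathrel{\mathcal R^{\mathrm{nf}}}v_1$. $\mathcal R$ is a normal form simulation if $t_0\mathrel{\mathcal R}t_1$ and $t_0\Downarrow t_0'$ imply $t_1\Downarrow t_1'$ with $t_0'\mathrel{\mathcal R^{\mathrm{nf}}}t_1'$; a bisimulation if $\mathcal R$ and $\mathcal R^{-1}$ are simulations; $\sim$ is the largest normal form bisimulation. *)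

(* The calculus lambda_S (shift/reset) in locally nameless
   representation: bound variables are de Bruijn indices (so alpha-equivalent
   terms are syntactically equal), free variables are names (nat). *)
From Stdlib Require Import List Arith.
Import ListNotations.

Inductive term : Type :=
| BVar  : nat -> term
| FVar  : nat -> term
| Lam   : term -> term
| App   : term -> term -> term
| Shift : term -> term           (* S k. t (binds index 0) *)
| Reset : term -> term.

Definition is_value (t : term) : Prop :=
  match t with Lam _ | FVar _ => True | _ => False end.

Fixpoint fv (t : term) : list nat :=
  match t with
  | BVar _ => []
  | FVar x => [x]
  | Lam b => fv b
  | App a b => fv a ++ fv b
  | Shift b => fv b
  | Reset b => fv b
  end.

Fixpoint open_rec (k : nat) (u : term) (t : term) : term :=
  match t with
  | BVar n => if Nat.eqb n k then u else BVar n
  | FVar x => FVar x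
  | Lam b => Lam (open_rec (S k) u b)
  | App a b => App (open_rec k u a) (open_rec k u b)
  | Shift b => Shift (open_rec (S k) u b)
  | Reset b => Reset (open_rec k u b)
  end.
Definition open (b u : term) : term := open_rec 0 u b.

Fixpoint close_rec (k : nat) (x : nat) (t : term) : term :=
  match t with
  | BVar n => BVar n
  | FVar y => if Nat.eqb y x then BVar k else FVar y
  | Lam b => Lam (close_rec (S k) x b)
  | App a b => App (close_rec k x a) (close_rec k x b)
  | Shift b => Shift (close_rec (S k) x b)
  | Reset b => Reset (close_rec k x b)
  end.
Definition close (x : nat) (t : term) : term := close_rec 0 x t.

(* local closure: the representations of genuine (alpha-classes of) terms *)
Fixpoint lc_at (k : nat) (t : term) : Prop :=
  match t with
  | BVar n => n < k
  | FVar _ => True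
  | Lam b => lc_at (S k) b
  | App a b => lc_at k a /\ lc_at k b
  | Shift b => lc_at (S k) b
  | Reset b => lc_at k b
  end.
Definition lc (t : term) : Prop := lc_at 0 t.

Inductive ectx : Type :=
| EHole : ectx
| EArgR : term -> ectx -> ectx
| EFunL : ectx -> term -> ectx
| EReset : ectx -> ectx.

Fixpoint plug (E : ectx) (u : term) : term :=
  match E with
  | EHole => u
  | EArgR v E' => App v (plug E' u)
  | EFunL E' t => App (plug E' u) t
  | EReset E' => Reset (plug E' u)
  end.

Fixpoint cplug (E : ectx) (E2 : ectx) : ectx :=
  match E with
  | EHole => E2
  | EArgR v E' => EArgR v (cplug E' E2)
  | EFunL E' t => EFunL (cplug E' E2) t
  | EReset E' => EReset (cplug E' E2)
  end.

Fixpoint ectx_ok (E : ectx) : Prop :=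
  match E with
  | EHole => True
  | EArgR v E' => is_value v /\ ectx_ok E'
  | EFunL E' _ => ectx_ok E'
  | EReset E' => ectx_ok E'
  end.

Fixpoint pure (E : ectx) : Prop :=
  match E with
  | EHole => True
  | EArgR v E' => is_value v /\ pure E'
  | EFunL E' _ => pure E'
  | EReset _ => False
  end.

Fixpoint fv_ctx (E : ectx) : list nat :=
  match E with
  | EHole => []
  | EArgR v E' => fv v ++ fv_ctx E'
  | EFunL E' t => fv_ctx E' ++ fv t
  | EReset E' => fv_ctx E'
  end.

Fixpoint lc_ctx (E : ectx) : Prop :=
  match E with
  | EHole => True
  | EArgR v E' => lc v /\ lc_ctx E'
  | EFunL E' t => lc_ctx E' /\ lc t
  | EReset E' => lc_ctx E'
  end.

Inductive step : term -> term -> Prop :=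
| step_beta : forall E b v,
    ectx_ok E -> is_value v ->
    step (plug E (App (Lam b) v)) (plug E (open b v))
| step_shift : forall E F b x,
    ectx_ok E -> pure F -> ~ In x (fv_ctx F) ->
    step (plug E (Reset (plug F (Shift b))))
         (plug E (Reset (open b (Lam (close x (Reset (plug F (FVar x))))))))
| step_reset : forall E v,
    ectx_ok E -> is_value v ->
    step (plug E (Reset v)) (plug E v).

Inductive star : term -> term -> Prop :=
| star_refl : forall t, star t t
| star_step : forall t t' t'', step t t' -> star t' t'' -> star t t''.

Definition irreducible (t : term) : Prop := ~ exists t', step t t'.

Definition evals (t t' : term) : Prop := star t t' /\ irreducible t'.

Definition rel := term -> term -> Prop.

Definition ctx_rel (R : rel) (E0 E1 : ectx) : Prop :=
  (exists E0' F0 E1' F1,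
      pure F0 /\ pure F1 /\
      E0 = cplug E0' (EReset F0) /\ E1 = cplug E1' (EReset F1) /\
      exists x, ~ In x (fv_ctx E0) /\ ~ In x (fv_ctx E1) /\
        R (plug E0' (FVar x)) (plug E1' (FVar x)) /\
        R (Reset (plug F0 (FVar x))) (Reset (plug F1 (FVar x))))
  \/
  (pure E0 /\ pure E1 /\
   exists x, ~ In x (fv_ctx E0) /\ ~ In x (fv_ctx E1) /\
     R (plug E0 (FVar x)) (plug E1 (FVar x))).

Definition vapp (v : term) (y : nat) : term :=
  match v with
  | FVar x => App (FVar x) (FVar y)
  | Lam b => open b (FVar y)
  | _ => App v (FVar y)  (* not used on values *)
  end.

Definition value_rel (R : rel) (v0 v1 : term) : Prop :=
  is_value v0 /\ is_value v1 /\
  exists y, ~ In y (fv v0) /\ ~ In y (fv v1) /\ R (vapp v0 y) (vapp v1 y).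

Definition nf_rel (R : rel) (t0 t1 : term) : Prop :=
  value_rel R t0 t1
  \/ (exists F0 F1 b0 b1,
        pure F0 /\ pure F1 /\
        t0 = plug F0 (Shift b0) /\ t1 = plug F1 (Shift b1) /\
        ctx_rel R F0 F1 /\
        exists k, ~ In k (fv b0) /\ ~ In k (fv b1) /\
          R (Reset (open b0 (FVar k))) (Reset (open b1 (FVar k))))
  \/ (exists E0 E1 x v0 v1,
        ectx_ok E0 /\ ectx_ok E1 /\
        t0 = plug E0 (App (FVar x) v0) /\ t1 = plug E1 (App (FVar x) v1) /\
        ctx_rel R E0 E1 /\ value_rel R v0 v1).

Definition nf_simulation (R : rel) : Prop :=
  forall t0 t1 t0', R t0 t1 -> evals t0 t0' ->
    exists t1', evals t1 t1' /\ nf_rel R t0' t1'.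

Definition nf_bisimulation (R : rel) : Prop :=
  nf_simulation R /\ nf_simulation (fun t0 t1 => R t1 t0).

(* normal form bisimilarity: the largest normal form bisimulation
   (= the union of all normal form bisimulations) *)
Definition nf_bisim (t0 t1 : term) : Prop :=
  exists R, nf_bisimulation R /\ R t0 t1.

(* The relation [adm] relates [<(λx.<F[x]>) t>] to [<F[t]>], is closed under the
   term constructors, and lets a reset around a value or around a reset be dropped
   on the left.  Reduction is deterministic, and each step of a left-hand term is
   either matched by one step of its partner or is administrative (the β-step that
   fires [(λx.<F[x]>) t], or the removal of such a reset), in which case the left
   term shrinks while staying related to the same right term.  Hence related terms
   evaluate together, and an irreducible left term has the same shape as its
   partner, with related components. *)
From Stdlib Require Import List Arith Lia Classical.

Lemma fresh_var (l : list nat) : exists y, ~ In y l.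
Proof.
  assert (Hmax : forall y, In y l -> y <= fold_right max 0 l).
  { induction l as [|a l IH]; simpl; intros y Hy; [contradiction|].
    destruct Hy as [<-|Hy]; [lia|]. specialize (IH y Hy); lia. }
  exists (S (fold_right max 0 l)). intro Hin. apply Hmax in Hin. lia.
Qed.

Lemma fresh_var2 (l1 l2 : list nat) : exists y, ~ In y l1 /\ ~ In y l2.
Proof.
  destruct (fresh_var (l1 ++ l2)) as [y Hy]. exists y.
  split; intro; apply Hy; apply in_or_app; auto.
Qed.

(** * Contexts, opening, closing and local closure *)

Lemma plug_cplug E E2 u : plug (cplug E E2) u = plug E (plug E2 u).
Proof. induction E; simpl; congruence. Qed.

Lemma cplug_assoc E1 E2 E3 : cplug (cplug E1 E2) E3 = cplug E1 (cplug E2 E3).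
Proof. induction E1; simpl; congruence. Qed.

Lemma pure_cplug E E2 : pure E -> pure E2 -> pure (cplug E E2).
Proof. induction E; simpl; tauto. Qed.

Lemma pure_ectx_ok E : pure E -> ectx_ok E.
Proof. induction E; simpl; tauto. Qed.

Lemma ectx_ok_cplug E E2 : ectx_ok E -> ectx_ok E2 -> ectx_ok (cplug E E2).
Proof. induction E; simpl; tauto. Qed.

Lemma ectx_ok_pure_or_reset E :
  ectx_ok E -> pure E \/ exists E' F, pure F /\ E = cplug E' (EReset F).
Proof.
  induction E as [|v E IH|E IH u|E IH]; simpl; intros HE.
  - left; auto.
  - destruct HE as [Hv HE]. destruct (IH HE) as [Hp | (E' & F & HF & ->)]; auto.
    right. exists (EArgR v E'), F; auto.
  - destruct (IH HE) as [Hp | (E' & F & HF & ->)]; auto.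
    right. exists (EFunL E' u), F; auto.
  - destruct (IH HE) as [Hp | (E' & F & HF & ->)].
    + right. exists EHole, E; auto.
    + right. exists (EReset E'), F; auto.
Qed.

Lemma close_rec_fresh w : forall k x, ~ In x (fv w) -> close_rec k x w = w.
Proof.
  induction w; simpl; intros k x Hx; try rewrite IHw; auto.
  - destruct (Nat.eqb_spec n x); subst; tauto.
  - rewrite IHw1, IHw2; auto; intro; apply Hx; apply in_or_app; auto.
Qed.

Lemma close_rec_plug E : forall k x u, ~ In x (fv_ctx E) ->
  close_rec k x (plug E u) = plug E (close_rec k x u).
Proof.
  induction E; simpl; intros k x u Hx; auto.
  - rewrite (close_rec_fresh t), IHE; auto; intro; apply Hx; apply in_or_app; auto.
  - rewrite (close_rec_fresh t), IHE; auto; intro; apply Hx; apply in_or_app; auto.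
  - rewrite IHE; auto.
Qed.

Lemma close_reset_plug F x : ~ In x (fv_ctx F) ->
  close x (Reset (plug F (FVar x))) = Reset (plug F (BVar 0)).
Proof.
  intros Hx. unfold close; simpl. rewrite close_rec_plug; auto.
  simpl. rewrite Nat.eqb_refl. reflexivity.
Qed.

Lemma lc_at_mono w : forall n m, lc_at n w -> n <= m -> lc_at m w.
Proof.
  induction w; simpl; intros n0 m H Hle; try tauto; try lia.
  - eapply IHw; eauto; lia.
  - destruct H; split; eauto.
  - eapply IHw; eauto; lia.
  - eauto.
Qed.

Lemma open_rec_lc w : forall n k u, lc_at n w -> n <= k -> open_rec k u w = w.
Proof.
  induction w; simpl; intros n0 k u H Hle.
  - destruct (Nat.eqb_spec n k); auto; lia.
  - reflexivity.
  - erewrite IHw; eauto; lia.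
  - destruct H; erewrite IHw1, IHw2; eauto.
  - erewrite IHw; eauto; lia.
  - erewrite IHw; eauto.
Qed.

Lemma open_rec_plug G : forall k u w, lc_ctx G ->
  open_rec k u (plug G w) = plug G (open_rec k u w).
Proof.
  induction G; simpl; intros k u w H; auto.
  - destruct H. rewrite (open_rec_lc t 0), IHG; auto; lia.
  - destruct H. rewrite (open_rec_lc t 0), IHG; auto; lia.
  - rewrite IHG; auto.
Qed.

Lemma lc_at_open b : forall n v, lc_at (S n) b -> lc_at n v -> lc_at n (open_rec n v b).
Proof.
  induction b; simpl; intros n0 v H Hv; auto.
  - destruct (Nat.eqb_spec n n0); subst; auto. simpl; lia.
  - apply IHb; auto. eapply lc_at_mono; eauto.
  - destruct H; split; auto.
  - apply IHb; auto. eapply lc_at_mono; eauto.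
Qed.

Lemma lc_plug_inv E : forall u, lc (plug E u) -> lc_ctx E /\ lc u.
Proof.
  induction E; simpl; intros u H; auto.
  - destruct H as [H1 H2]; apply IHE in H2; tauto.
  - destruct H as [H1 H2]; apply IHE in H1; tauto.
Qed.

Lemma lc_at_plug E : forall n u, lc_ctx E -> lc_at n u -> lc_at n (plug E u).
Proof.
  induction E; simpl; intros n u H Hu; auto.
  - destruct H; split; auto. eapply lc_at_mono; eauto; lia.
  - destruct H; split; auto. eapply lc_at_mono; eauto; lia.
Qed.

Lemma lc_ctx_cplug E E2 : lc_ctx (cplug E E2) <-> lc_ctx E /\ lc_ctx E2.
Proof. induction E; simpl; tauto. Qed.

(** * Reduction as a congruence *)

(* [step] decomposes a term as [E[redex]]; [sstep] is the same relation presented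
   by congruence rules, which is what makes induction on reductions practical. *)
Inductive sstep : term -> term -> Prop :=
| sstep_beta b v : is_value v -> sstep (App (Lam b) v) (open b v)
| sstep_reset v : is_value v -> sstep (Reset v) v
| sstep_shift F b x : pure F -> ~ In x (fv_ctx F) ->
    sstep (Reset (plug F (Shift b)))
          (Reset (open b (Lam (close x (Reset (plug F (FVar x)))))))
| sstep_appl s s' u : sstep s s' -> sstep (App s u) (App s' u)
| sstep_appr v s s' : is_value v -> sstep s s' -> sstep (App v s) (App v s')
| sstep_resetc s s' : sstep s s' -> sstep (Reset s) (Reset s').

Inductive sstar : term -> term -> Prop :=
| sstar_refl t : sstar t t
| sstar_step t t' t'' : sstep t t' -> sstar t' t'' -> sstar t t''.

Definition sirred (t : term) : Prop := ~ exists t', sstep t t'.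

Lemma sstep_plug E : forall a b, ectx_ok E -> sstep a b -> sstep (plug E a) (plug E b).
Proof.
  induction E; simpl; intros a b HE H; auto.
  - destruct HE; apply sstep_appr; auto.
  - apply sstep_appl; auto.
  - apply sstep_resetc; auto.
Qed.

Lemma step_plug E a b : ectx_ok E -> step a b -> step (plug E a) (plug E b).
Proof.
  intros HE H; destruct H; rewrite <- !plug_cplug;
    constructor; auto; apply ectx_ok_cplug; auto.
Qed.

Lemma step_iff_sstep a b : step a b <-> sstep a b.
Proof.
  split; intros H.
  - destruct H; apply sstep_plug; auto; constructor; auto.
  - induction H.
    + exact (step_beta EHole b v I H).
    + exact (step_reset EHole v I H).
    + exact (step_shift EHole F b x I H H0).
    + apply (step_plug (EFunL EHole u)); simpl; auto.
    + apply (step_plug (EArgR v EHole)); simpl; auto.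
    + apply (step_plug (EReset EHole)); simpl; auto.
Qed.

Lemma star_iff_sstar a b : star a b <-> sstar a b.
Proof.
  split; intros H; induction H; econstructor; eauto; apply step_iff_sstep; auto.
Qed.

Lemma irreducible_iff_sirred t : irreducible t <-> sirred t.
Proof.
  unfold irreducible, sirred; split; intros H [t' Ht]; apply H; exists t';
    apply step_iff_sstep; auto.
Qed.

Lemma sstar_trans a b c : sstar a b -> sstar b c -> sstar a c.
Proof. intros H; induction H; intros; eauto using sstar_step. Qed.

Lemma lc_sstep t t' : sstep t t' -> lc t -> lc t'.
Proof.
  unfold lc; intros H; induction H; simpl; intros Hl; try tauto.
  - destruct Hl. apply lc_at_open; auto.
  - apply lc_plug_inv in Hl. destruct Hl as [HF Hb].
    apply lc_at_open; auto. rewrite close_reset_plug; auto.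
    apply lc_at_plug; auto. simpl; lia.
Qed.

(** * Normal forms and determinism *)

Definition normal_form (t : term) : Prop :=
  is_value t
  \/ (exists F b, pure F /\ t = plug F (Shift b))
  \/ (exists E x v, ectx_ok E /\ is_value v /\ t = plug E (App (FVar x) v)).

Lemma value_sirred v w : is_value v -> ~ sstep v w.
Proof. destruct v; simpl; intros H Hs; inversion Hs; tauto. Qed.

Ltac value_step :=
  match goal with
  | H : sstep (FVar _) _ |- _ => inversion H
  | H : sstep (Lam _) _ |- _ => inversion H
  | H : is_value ?v, H2 : sstep ?v _ |- _ =>
      exfalso; exact (value_sirred _ _ H H2)
  end.

Lemma plug_shift_not_value F b : ~ is_value (plug F (Shift b)).
Proof. destruct F; simpl; auto. Qed.

Lemma plug_open_not_value E x v : ~ is_value (plug E (App (FVar x) v)).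
Proof. destruct E; simpl; auto. Qed.

Lemma control_stuck_sirred F b w : pure F -> ~ sstep (plug F (Shift b)) w.
Proof.
  revert w; induction F; simpl; intros w HF Hs.
  - inversion Hs.
  - destruct HF. inversion Hs; subst.
    + eapply plug_shift_not_value; eauto.
    + value_step.
    + eapply IHF; eauto.
  - inversion Hs; subst.
    + destruct F; discriminate.
    + eapply IHF; eauto.
    + eapply plug_shift_not_value; eauto.
  - contradiction.
Qed.

Lemma plug_shift_inj F : forall F' b b', pure F -> pure F' ->
  plug F (Shift b) = plug F' (Shift b') -> F = F' /\ b = b'.
Proof.
  induction F; intros F' b b' HF HF' Heq; destruct F'; simpl in *;
    try discriminate; try contradiction; injection Heq; intros; subst.
  - auto.
  - destruct HF, HF'. destruct (IHF F' b b') as [-> ->]; auto.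
  - destruct HF. exfalso; eapply plug_shift_not_value; eauto.
  - destruct HF'. exfalso; eapply plug_shift_not_value; eauto.
  - destruct (IHF F' b b') as [-> ->]; auto.
Qed.

Lemma open_stuck_neq_control_stuck E : forall F x v b, ectx_ok E -> pure F ->
  is_value v -> plug E (App (FVar x) v) <> plug F (Shift b).
Proof.
  induction E; intros F x v b HE HF Hv H; destruct F; simpl in *; try discriminate;
    try contradiction; injection H; intros; subst;
    repeat match goal with H: _ /\ _ |- _ => destruct H end;
    first [ solve [eapply plug_shift_not_value; eauto]
          | solve [eapply plug_open_not_value; eauto]
          | solve [eapply IHE; eauto] | (destruct F; discriminate) ].
Qed.

Lemma open_stuck_sirred E : forall x v w, ectx_ok E -> is_value v ->
  ~ sstep (plug E (App (FVar x) v)) w.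
Proof.
  induction E; simpl; intros x v w HE Hv Hs.
  - inversion Hs; subst; value_step.
  - destruct HE. inversion Hs; subst; try value_step.
    + eapply plug_open_not_value; eauto.
    + eapply (IHE x v); eauto.
  - inversion Hs; subst.
    + destruct E; discriminate.
    + eapply (IHE x v); eauto.
    + eapply plug_open_not_value; eauto.
  - inversion Hs; subst.
    + eapply plug_open_not_value; eauto.
    + eapply open_stuck_neq_control_stuck; eauto.
    + eapply (IHE x v); eauto.
Qed.

Lemma normal_form_sirred t : normal_form t -> sirred t.
Proof.
  intros [Hv | [(F & b & HF & ->) | (E & x & v & HE & Hv & ->)]] [t' Ht].
  - eapply value_sirred; eauto.
  - eapply control_stuck_sirred; eauto.
  - eapply open_stuck_sirred; eauto.
Qed.

Lemma sirred_normal_form t : lc t -> sirred t -> normal_form t.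
Proof.
  unfold lc, sirred, normal_form; induction t; simpl; intros Hl Hi.
  - lia.
  - left; exact I.
  - left; exact I.
  - destruct Hl as [Hl1 Hl2].
    assert (Hi1 : ~ exists t', sstep t1 t')
      by (intros [t' Ht]; apply Hi; eexists; apply sstep_appl; eauto).
    destruct (IHt1 Hl1 Hi1) as [Hv | [(F & b & HF & ->) | (E & x & v & HE & Hv & ->)]].
    + assert (Hi2 : ~ exists t', sstep t2 t')
        by (intros [t' Ht]; apply Hi; eexists; apply sstep_appr; eauto).
      destruct (IHt2 Hl2 Hi2)
        as [Hv2 | [(F & b & HF & ->) | (E & x & v & HE & Hv' & ->)]].
      * destruct t1; simpl in Hv; try contradiction.
        -- right; right. exists EHole, n, t2; simpl; auto.
        -- exfalso; apply Hi; eexists; apply sstep_beta; auto.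
      * right; left. exists (EArgR t1 F), b; simpl; auto.
      * right; right. exists (EArgR t1 E), x, v; simpl; auto.
    + right; left. exists (EFunL F t2), b; simpl; auto.
    + right; right. exists (EFunL E t2), x, v; simpl; auto.
  - right; left. exists EHole, t; simpl; auto.
  - assert (Hi1 : ~ exists t', sstep t t')
      by (intros [t' Ht]; apply Hi; eexists; apply sstep_resetc; eauto).
    destruct (IHt Hl Hi1) as [Hv | [(F & b & HF & ->) | (E & x & v & HE & Hv & ->)]].
    + exfalso; apply Hi; eexists; apply sstep_reset; auto.
    + exfalso. destruct (fresh_var (fv_ctx F)) as [y Hy].
      apply Hi; eexists; apply (sstep_shift F b y); auto.
    + right; right. exists (EReset E), x, v; simpl; auto.
Qed.

Lemma sstep_deterministic t a : sstep t a -> forall b, sstep t b -> a = b.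
Proof.
  intros H; induction H; intros c Hc; inversion Hc; subst; auto;
    try solve [exfalso; value_step];
    try solve [f_equal; auto];
    try solve [exfalso; eapply plug_shift_not_value; eauto];
    try solve [exfalso; eapply control_stuck_sirred; eauto].
  destruct (plug_shift_inj F0 F b0 b) as [-> ->]; auto.
  rewrite !close_reset_plug; auto.
Qed.

(** * The candidate relation *)

Definition value_or_reset (t : term) : Prop :=
  match t with Lam _ | FVar _ | Reset _ => True | _ => False end.

(* [adm_redex] is the pair of the theorem with [x] closed as index 0, generalized
   to related arguments. *)
Inductive adm : term -> term -> Prop :=
| adm_bvar n : adm (BVar n) (BVar n)
| adm_fvar x : adm (FVar x) (FVar x)
| adm_lam a b : adm a b -> adm (Lam a) (Lam b)
| adm_app a b c d : adm a c -> adm b d -> adm (App a b) (App c d)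
| adm_shift a b : adm a b -> adm (Shift a) (Shift b)
| adm_reset a b : adm a b -> adm (Reset a) (Reset b)
| adm_redex G s0 s1 : pure G -> lc_ctx G -> adm s0 s1 ->
    adm (Reset (App (Lam (Reset (plug G (BVar 0)))) s0)) (Reset (plug G s1))
| adm_drop_reset s0 s1 : adm s0 s1 -> value_or_reset s1 -> adm (Reset s0) s1.

Inductive adm_ctx : ectx -> ectx -> Prop :=
| adm_ctx_hole : adm_ctx EHole EHole
| adm_ctx_argr v0 v1 E0 E1 :
    adm v0 v1 -> adm_ctx E0 E1 -> adm_ctx (EArgR v0 E0) (EArgR v1 E1)
| adm_ctx_funl E0 E1 u0 u1 :
    adm_ctx E0 E1 -> adm u0 u1 -> adm_ctx (EFunL E0 u0) (EFunL E1 u1)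
| adm_ctx_reset E0 E1 : adm_ctx E0 E1 -> adm_ctx (EReset E0) (EReset E1)
| adm_ctx_redex G E0 E1 : pure G -> lc_ctx G -> adm_ctx E0 E1 ->
    adm_ctx (EReset (EArgR (Lam (Reset (plug G (BVar 0)))) E0)) (EReset (cplug G E1))
| adm_ctx_drop_reset E0 E1 : adm_ctx E0 (EReset E1) -> adm_ctx (EReset E0) (EReset E1).

Lemma adm_refl t : adm t t.
Proof. induction t; constructor; auto. Qed.

Lemma adm_ctx_refl E : adm_ctx E E.
Proof. induction E; constructor; auto using adm_refl. Qed.

Lemma adm_plug E0 E1 u0 u1 : adm_ctx E0 E1 -> adm u0 u1 -> adm (plug E0 u0) (plug E1 u1).
Proof.
  intros H Hu; induction H; simpl.
  - exact Hu.
  - apply adm_app; auto.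
  - apply adm_app; auto.
  - apply adm_reset; auto.
  - rewrite plug_cplug. apply adm_redex; auto.
  - apply adm_drop_reset; simpl; auto.
Qed.

Lemma adm_value v0 v1 : adm v0 v1 -> is_value v0 -> is_value v1.
Proof. intros H Hv; inversion H; subst; simpl in *; tauto. Qed.

Lemma adm_ctx_pure E0 E1 : adm_ctx E0 E1 -> pure E0 -> pure E1.
Proof.
  intros H; induction H; simpl; try tauto.
  intros [Hv Hp]; split; eauto using adm_value.
Qed.

Lemma adm_ctx_ok E0 E1 : adm_ctx E0 E1 -> ectx_ok E0 -> ectx_ok E1.
Proof.
  intros H; induction H; simpl; try tauto.
  - intros [Hv Ho]; split; eauto using adm_value.
  - intros [_ Ho]. apply ectx_ok_cplug; auto using pure_ectx_ok.
Qed.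

Lemma value_or_reset_sstep t t' : value_or_reset t -> sstep t t' -> value_or_reset t'.
Proof.
  intros H Hs; destruct t; simpl in H; try contradiction; inversion Hs; subst; simpl; auto.
  destruct t'; simpl in *; auto.
Qed.

Lemma adm_open b0 b1 : adm b0 b1 -> forall k v0 v1, adm v0 v1 -> is_value v1 ->
  adm (open_rec k v0 b0) (open_rec k v1 b1).
Proof.
  intros H; induction H; simpl; intros k v0 v1 Hv Hv1;
    try solve [constructor; auto].
  - destruct (Nat.eqb n k); auto. constructor.
  - rewrite !open_rec_plug; auto. apply adm_redex; auto.
  - apply adm_drop_reset; auto.
    destruct s1; simpl in H0 |- *; try contradiction; auto.
Qed.

Lemma adm_control_stuck_inv F : forall b t1, pure F -> adm (plug F (Shift b)) t1 ->
  exists F1 b1, pure F1 /\ t1 = plug F1 (Shift b1) /\ adm_ctx F F1 /\ adm b b1.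
Proof.
  induction F as [|v F IH|F IH u|F]; simpl; intros b t1 HF H; try contradiction.
  - inversion H; subst. exists EHole, b0; simpl; repeat split; auto. constructor.
  - destruct HF as [Hv HF]. inversion H; subst.
    destruct (IH b d HF H4) as (F1 & b1 & HF1 & -> & Ha & Hb).
    exists (EArgR c F1), b1; simpl; repeat split; eauto using adm_value.
    constructor; auto.
  - inversion H; subst.
    destruct (IH b c HF H2) as (F1 & b1 & HF1 & -> & Ha & Hb).
    exists (EFunL F1 d), b1; simpl; repeat split; auto. constructor; auto.
Qed.

Lemma adm_open_stuck_inv E : forall x v t1, ectx_ok E -> adm (plug E (App (FVar x) v)) t1 ->
  exists E1 v1, t1 = plug E1 (App (FVar x) v1) /\ adm_ctx E E1 /\ adm v v1.
Proof.
  induction E as [|u E IH|E IH u|E IH]; simpl; intros x v t1 HE H.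
  - inversion H; subst. inversion H2; subst.
    exists EHole, d; repeat split; auto. constructor.
  - destruct HE as [Hv HE]. inversion H; subst.
    destruct (IH x v d HE H4) as (E1 & v1 & -> & Ha & Hb).
    exists (EArgR c E1), v1; repeat split; auto. constructor; auto.
  - inversion H; subst.
    destruct (IH x v c HE H2) as (E1 & v1 & -> & Ha & Hb).
    exists (EFunL E1 d), v1; repeat split; auto. constructor; auto.
  - inversion H; subst.
    + destruct (IH x v b HE H1) as (E1 & v1 & -> & Ha & Hb).
      exists (EReset E1), v1; repeat split; auto. constructor; auto.
    + assert (Happ : adm (plug E (App (FVar x) v))
                         (App (Lam (Reset (plug G (BVar 0)))) s1)).
      { rewrite <- H0. constructor; auto using adm_refl. }
      destruct (IH x v _ HE Happ) as (E1 & v1 & Heq & Ha & Hb).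
      destruct E; simpl in H0; try discriminate.
      * injection H0; intros; subst.
        inversion Ha; subst. simpl in Heq. injection Heq; intros; subst.
        match goal with H : adm_ctx E ?E' |- _ => exists (EReset (cplug G E')), v1 end.
        repeat split; auto.
        -- simpl. rewrite plug_cplug. auto.
        -- apply adm_ctx_redex; auto.
      * injection H0; intros. destruct E; discriminate.
    + destruct (IH x v t1 HE H1) as (E1 & v1 & -> & Ha & Hb).
      destruct E1; simpl in H2; try contradiction.
      exists (EReset E1), v1; repeat split; auto. apply adm_ctx_drop_reset; auto.
Qed.

Lemma adm_ctx_reset_inv F0 E1 : pure F0 -> adm_ctx (EReset F0) E1 ->
  exists F1, pure F1 /\ E1 = EReset F1 /\
    forall z, adm (Reset (plug F0 z)) (Reset (plug F1 z)).
Proof.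
  intros HF H. inversion H; subst.
  - exists E2; repeat split; eauto using adm_ctx_pure.
    intros; constructor; apply adm_plug; auto using adm_refl.
  - exists (cplug G E2); repeat split; auto.
    + apply pure_cplug; auto. simpl in HF. destruct HF; eapply adm_ctx_pure; eauto.
    + intros z. simpl. rewrite plug_cplug. apply adm_redex; auto.
      apply adm_plug; auto using adm_refl.
  - exfalso. apply adm_ctx_pure in H1; auto.
Qed.

(* The delimited part of an evaluation context is matched by a delimited part of
   its partner; the parts outside agree on anything that cannot be an operand of
   a dropped reset. *)
Lemma adm_ctx_split E0' : forall F0 E1, pure F0 -> adm_ctx (cplug E0' (EReset F0)) E1 ->
  exists E1' F1, pure F1 /\ E1 = cplug E1' (EReset F1) /\
    (forall z, value_or_reset z -> adm (plug E0' z) (plug E1' z)) /\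
    (forall z, adm (Reset (plug F0 z)) (Reset (plug F1 z))).
Proof.
  induction E0' as [|v E0' IH|E0' IH u|E0' IH]; simpl; intros F0 E1 HF H.
  - destruct (adm_ctx_reset_inv F0 E1 HF H) as (F1 & HF1 & -> & HF01).
    exists EHole, F1; repeat split; auto using adm_refl.
  - inversion H; subst.
    destruct (IH F0 E2 HF H4) as (E1' & F1 & HF1 & -> & P1 & P2).
    exists (EArgR v1 E1'), F1; repeat split; auto.
    intros z Hz; simpl; constructor; auto.
  - inversion H; subst.
    destruct (IH F0 E2 HF H2) as (E1' & F1 & HF1 & -> & P1 & P2).
    exists (EFunL E1' u1), F1; repeat split; auto.
    intros z Hz; simpl; constructor; auto.
  - inversion H; subst.
    + destruct (IH F0 E2 HF H1) as (E1' & F1 & HF1 & -> & P1 & P2).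
      exists (EReset E1'), F1; repeat split; auto.
      intros z Hz; simpl; constructor; auto.
    + destruct E0'; simpl in H0; try discriminate.
      injection H0; intros; subst.
      assert (Hr : adm_ctx (EArgR (Lam (Reset (plug G (BVar 0)))) (cplug E0' (EReset F0)))
                           (EArgR (Lam (Reset (plug G (BVar 0)))) E2))
        by (constructor; auto using adm_refl).
      destruct (IH F0 _ HF Hr) as (E1' & F1 & HF1 & Heq & P1 & P2).
      destruct E1'; simpl in Heq; try discriminate.
      injection Heq; intros; subst.
      exists (EReset (cplug G E1')), F1; repeat split; auto.
      * simpl. rewrite cplug_assoc. auto.
      * intros z Hz. specialize (P1 z Hz). simpl in P1 |- *. inversion P1; subst.
        rewrite plug_cplug. apply adm_redex; auto.
    + destruct (IH F0 _ HF H1) as (E1' & F1 & HF1 & Heq & P1 & P2).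
      exists E1', F1; repeat split; auto.
      intros z Hz. simpl. apply adm_drop_reset; auto.
      destruct E1'; simpl in Heq |- *; try discriminate; auto.
Qed.

(** * One-step simulation *)

Fixpoint size (t : term) : nat :=
  match t with
  | BVar _ | FVar _ => 1
  | Lam b | Shift b | Reset b => S (size b)
  | App a b => S (size a + size b)
  end.

Fixpoint csize (E : ectx) : nat :=
  match E with
  | EHole => 0
  | EArgR v E => S (size v + csize E)
  | EFunL E t => S (csize E + size t)
  | EReset E => S (csize E)
  end.

Lemma size_plug E u : size (plug E u) = csize E + size u.
Proof. induction E; simpl; lia. Qed.

Definition step_matched (Rel : rel) (t0 t0' t1 : term) : Prop :=
  (exists t1', sstep t1 t1' /\ Rel t0' t1') \/ (Rel t0' t1 /\ size t0' < size t0).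

Lemma adm_beta_matched b v t1 : is_value v -> adm (App (Lam b) v) t1 ->
  step_matched adm (App (Lam b) v) (open b v) t1.
Proof.
  intros Hv Ht. inversion Ht; subst. inversion H1; subst.
  left. exists (open b0 d). split.
  - constructor. eapply adm_value; eauto.
  - apply adm_open; auto. eapply adm_value; eauto.
Qed.

Lemma adm_reset_matched v t1 : is_value v -> adm (Reset v) t1 ->
  step_matched adm (Reset v) v t1.
Proof.
  intros Hv Ht. inversion Ht; subst.
  - left. exists b. split; auto. constructor. eapply adm_value; eauto.
  - simpl in Hv; contradiction.
  - right. split; auto.
Qed.

Lemma adm_shift_matched F b x t1 : pure F -> ~ In x (fv_ctx F) ->
  adm (Reset (plug F (Shift b))) t1 ->
  step_matched adm (Reset (plug F (Shift b)))
    (Reset (open b (Lam (close x (Reset (plug F (FVar x))))))) t1.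
Proof.
  intros HF Hx Ht. rewrite close_reset_plug; auto. inversion Ht; subst.
  - destruct (adm_control_stuck_inv F b b0 HF H0) as (F1 & b1 & HF1 & -> & Ha & Hb).
    destruct (fresh_var (fv_ctx F1)) as [y Hy].
    left. eexists. split.
    + apply (sstep_shift F1 b1 y); auto.
    + rewrite close_reset_plug; auto. constructor. apply adm_open; simpl; auto.
      constructor. constructor. apply adm_plug; auto. constructor.
  - destruct F as [|u F|F u|F]; simpl in H; try discriminate.
    + injection H; intros; subst. destruct HF as [_ HF].
      match goal with H5 : adm (plug F (Shift b)) ?s1 |- _ =>
        destruct (adm_control_stuck_inv F b s1 HF H5) as (F1 & b1 & HF1 & -> & Ha & Hb) end.
      destruct (fresh_var (fv_ctx (cplug G F1))) as [y Hy].
      left. eexists. split.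
      * rewrite <- plug_cplug. apply (sstep_shift (cplug G F1) b1 y); auto.
        apply pure_cplug; auto.
      * rewrite close_reset_plug, plug_cplug; auto. simpl.
        constructor. apply adm_open; simpl; auto.
        constructor. apply adm_redex; auto. apply adm_plug; auto. constructor.
    + injection H; intros; subst. destruct F; discriminate.
  - destruct (adm_control_stuck_inv F b t1 HF H0) as (F1 & b1 & HF1 & -> & Ha & Hb).
    destruct F1; simpl in H1; contradiction.
Qed.

(* Firing the redex [(λ.<G[0]>) s0] itself is administrative: it is not matched. *)
Lemma adm_redex_matched G s0 s1 w : pure G -> lc_ctx G -> adm s0 s1 ->
  sstep (App (Lam (Reset (plug G (BVar 0)))) s0) w ->
  step_matched adm (App (Lam (Reset (plug G (BVar 0)))) s0) w
                   (App (Lam (Reset (plug G (BVar 0)))) s1) ->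
  step_matched adm (Reset (App (Lam (Reset (plug G (BVar 0)))) s0)) (Reset w)
                   (Reset (plug G s1)).
Proof.
  intros HG HlG Hs Hstep Hm. inversion Hstep; subst; [| value_step |].
  - right. unfold open; simpl. rewrite open_rec_plug; auto. simpl. split.
    + apply adm_drop_reset; simpl; auto. constructor.
      apply adm_plug; auto using adm_ctx_refl.
    + rewrite !size_plug. simpl. lia.
  - destruct Hm as [(w1 & Hs1 & Ha) | (Ha & Hsz)].
    + inversion Hs1; subst; [inversion Ha | value_step |].
      inversion Ha; subst. left. eexists. split.
      * apply sstep_resetc. apply sstep_plug; eauto using pure_ectx_ok.
      * apply adm_redex; eauto.
    + inversion Ha; subst. right. split.
      * apply adm_redex; auto.
      * simpl in *; lia.
Qed.

Lemma adm_step t0 t0' : sstep t0 t0' -> forall t1, adm t0 t1 -> step_matched adm t0 t0' t1.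
Proof.
  intros H; induction H; intros t1 Ht.
  - apply adm_beta_matched; auto.
  - apply adm_reset_matched; auto.
  - apply adm_shift_matched; auto.
  - inversion Ht; subst.
    destruct (IHsstep c H2) as [(c' & Hs & Ha) | (Ha & Hsz)].
    + left. exists (App c' d). split; constructor; auto.
    + right. split; [constructor; auto | simpl; lia].
  - inversion Ht; subst.
    destruct (IHsstep d H5) as [(d' & Hs & Ha) | (Ha & Hsz)].
    + left. exists (App c d'). split; constructor; auto. eapply adm_value; eauto.
    + right. split; [constructor; auto | simpl; lia].
  - inversion Ht; subst.
    + destruct (IHsstep b H1) as [(b' & Hs & Ha) | (Ha & Hsz)].
      * left. exists (Reset b'). split; constructor; auto.
      * right. split; [constructor; auto | simpl; lia].
    + apply adm_redex_matched; auto.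
      apply IHsstep. constructor; auto using adm_refl.
    + destruct (IHsstep t1 H1) as [(t1' & Hs & Ha) | (Ha & Hsz)].
      * left. exists t1'. split; auto. apply adm_drop_reset; auto.
        eapply value_or_reset_sstep; eauto.
      * right. split; [apply adm_drop_reset; auto | simpl; lia].
Qed.

(** * Related normal forms *)

Definition adm_lc : rel := fun a b => adm a b /\ lc a.

Lemma adm_lc_step t0 t0' t1 : adm_lc t0 t1 -> sstep t0 t0' -> step_matched adm_lc t0 t0' t1.
Proof.
  intros [Ha Hl] Hs. assert (Hl' : lc t0') by (eapply lc_sstep; eauto).
  destruct (adm_step t0 t0' Hs t1 Ha) as [(t1' & H1 & H2) | (H1 & H2)].
  - left; exists t1'; repeat split; auto.
  - right; repeat split; auto.
Qed.

Lemma adm_lc_value_rel v0 v1 : adm v0 v1 -> is_value v0 -> lc v0 -> value_rel adm_lc v0 v1.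
Proof.
  intros H Hv Hl. split; auto. split; [eapply adm_value; eauto|].
  destruct (fresh_var2 (fv v0) (fv v1)) as (y & Hy0 & Hy1).
  exists y; repeat split; auto.
  - destruct v0; simpl in Hv; try contradiction; inversion H; subst; simpl.
    + apply adm_refl.
    + apply adm_open; simpl; auto. constructor.
  - destruct v0; simpl in Hv; try contradiction; inversion H; subst;
      unfold lc in *; simpl in *; auto.
    apply lc_at_open; simpl; auto.
Qed.

Lemma adm_lc_ctx_rel E0 E1 : ectx_ok E0 -> lc_ctx E0 -> adm_ctx E0 E1 ->
  ctx_rel adm_lc E0 E1.
Proof.
  intros HE HlE Ha. destruct (ectx_ok_pure_or_reset E0 HE) as [Hp | (E0' & F0 & HF0 & ->)].
  - right. split; auto. split; [eapply adm_ctx_pure; eauto|].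
    destruct (fresh_var2 (fv_ctx E0) (fv_ctx E1)) as (y & Hy0 & Hy1).
    exists y; repeat split; auto.
    + apply adm_plug; auto. constructor.
    + apply lc_at_plug; simpl; auto.
  - destruct (adm_ctx_split E0' F0 E1 HF0 Ha) as (E1' & F1 & HF1 & -> & P1 & P2).
    apply lc_ctx_cplug in HlE. destruct HlE as [Hl1 Hl2].
    left. exists E0', F0, E1', F1. repeat split; auto.
    destruct (fresh_var2 (fv_ctx (cplug E0' (EReset F0))) (fv_ctx (cplug E1' (EReset F1))))
      as (y & Hy0 & Hy1).
    exists y; repeat split; auto.
    + apply P1. simpl; auto.
    + apply lc_at_plug; simpl; auto.
    + unfold lc; simpl; apply lc_at_plug; simpl; auto.
Qed.

Lemma adm_lc_nf_rel t0 t1 : adm t0 t1 -> lc t0 -> normal_form t0 ->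
  nf_rel adm_lc t0 t1 /\ normal_form t1.
Proof.
  intros H Hl [Hv | [(F & b & HF & ->) | (E & x & v & HE & Hv & ->)]].
  - split; left; [apply adm_lc_value_rel | eapply adm_value]; eauto.
  - destruct (adm_control_stuck_inv F b t1 HF H) as (F1 & b1 & HF1 & -> & Ha & Hb).
    apply lc_plug_inv in Hl. destruct Hl as [HlF Hlb].
    split; right; left; [|exists F1, b1; auto].
    exists F, F1, b, b1. repeat split; auto.
    + apply adm_lc_ctx_rel; auto using pure_ectx_ok.
    + destruct (fresh_var2 (fv b) (fv b1)) as (y & Hy0 & Hy1).
      exists y; repeat split; auto.
      * constructor. apply adm_open; simpl; auto. constructor.
      * unfold lc in *; simpl in *. apply lc_at_open; simpl; auto.
  - destruct (adm_open_stuck_inv E x v t1 HE H) as (E1 & v1 & -> & Ha & Hb).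
    apply lc_plug_inv in Hl. destruct Hl as [HlE Hlv].
    assert (HE1 : ectx_ok E1) by (eapply adm_ctx_ok; eauto).
    split; right; right.
    + exists E, E1, x, v, v1. do 4 (split; [auto|]). split.
      * apply adm_lc_ctx_rel; auto.
      * apply adm_lc_value_rel; auto. unfold lc in *; simpl in Hlv; tauto.
    + exists E1, x, v1. repeat split; auto. eapply adm_value; eauto.
Qed.

Lemma adm_lc_sirred t0 t1 : adm_lc t0 t1 -> sirred t0 -> nf_rel adm_lc t0 t1 /\ sirred t1.
Proof.
  intros [Ha Hl] Hi.
  destruct (adm_lc_nf_rel t0 t1 Ha Hl (sirred_normal_form t0 Hl Hi)) as [H1 H2].
  split; auto. apply normal_form_sirred; auto.
Qed.

(** * Stuttering simulations are normal form bisimulations *)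

Lemma value_rel_flip (Q : rel) a b : value_rel Q a b -> value_rel (fun x y => Q y x) b a.
Proof. intros (H1 & H2 & y & H3 & H4 & H5). split; auto. split; auto. exists y; auto. Qed.

Lemma ctx_rel_flip (Q : rel) a b : ctx_rel Q a b -> ctx_rel (fun x y => Q y x) b a.
Proof.
  intros [(E0' & F0 & E1' & F1 & H1 & H2 & H3 & H4 & y & H5 & H6 & H7 & H8) |
          (H1 & H2 & y & H3 & H4 & H5)].
  - left. exists E1', F1, E0', F0. repeat split; auto. exists y; auto.
  - right. split; auto. split; auto. exists y; auto.
Qed.

Lemma nf_rel_flip (Q : rel) a b : nf_rel Q a b -> nf_rel (fun x y => Q y x) b a.
Proof.
  intros [H | [(F0 & F1 & b0 & b1 & H1 & H2 & H3 & H4 & H5 & k & H6 & H7 & H8) |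
               (E0 & E1 & x & v0 & v1 & H1 & H2 & H3 & H4 & H5 & H6)]].
  - left. apply value_rel_flip; auto.
  - right; left. exists F1, F0, b1, b0. repeat split; auto.
    + apply ctx_rel_flip; auto.
    + exists k; auto.
  - right; right. exists E1, E0, x, v1, v0. do 4 (split; [auto|]). split.
    + apply ctx_rel_flip; auto.
    + apply value_rel_flip; auto.
Qed.

Section Stuttering.

Variable Rel : rel.
Hypothesis Rel_step : forall t0 t0' t1, Rel t0 t1 -> sstep t0 t0' -> step_matched Rel t0 t0' t1.
Hypothesis Rel_sirred : forall t0 t1, Rel t0 t1 -> sirred t0 -> nf_rel Rel t0 t1 /\ sirred t1.

Lemma stutter_to_sirred n : forall t0 t1, size t0 < n -> Rel t0 t1 -> sirred t1 ->
  exists t0', sstar t0 t0' /\ sirred t0' /\ Rel t0' t1.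
Proof.
  induction n as [|n IH]; intros t0 t1 Hs HR Hi; [lia|].
  destruct (classic (exists t', sstep t0 t')) as [[t' Ht] | Hn].
  - destruct (Rel_step t0 t' t1 HR Ht) as [(t1' & H1 & H2) | (H1 & H2)].
    + exfalso; apply Hi; eauto.
    + destruct (IH t' t1) as (t0' & S1 & S2 & S3); try lia; auto.
      exists t0'; split; auto. econstructor; eauto.
  - exists t0; repeat split; auto. constructor.
Qed.

(* Determinism is what forces the step that eventually matches [t1 -> t1'] to
   land in [t1']. *)
Lemma stutter_to_match n : forall t0 t1 t1', size t0 < n -> Rel t0 t1 -> sstep t1 t1' ->
  exists t0', sstar t0 t0' /\ Rel t0' t1'.
Proof.
  induction n as [|n IH]; intros t0 t1 t1' Hs HR Hst; [lia|].
  destruct (classic (exists t', sstep t0 t')) as [[t' Ht] | Hn].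
  - destruct (Rel_step t0 t' t1 HR Ht) as [(t1x & H1 & H2) | (H1 & H2)].
    + rewrite (sstep_deterministic _ _ H1 _ Hst) in H2.
      exists t'; split; auto. econstructor; eauto. constructor.
    + destruct (IH t' t1 t1') as (t0' & S1 & S2); try lia; auto.
      exists t0'; split; auto. econstructor; eauto.
  - destruct (Rel_sirred t0 t1 HR Hn) as [_ Hi]. exfalso; apply Hi; eauto.
Qed.

Lemma sstar_sim_left t0 t0' : sstar t0 t0' -> sirred t0' -> forall t1, Rel t0 t1 ->
  exists t1', sstar t1 t1' /\ sirred t1' /\ nf_rel Rel t0' t1'.
Proof.
  intros H; induction H as [t|t t' t'' Hst Hs IH]; intros Hi t1 HR.
  - destruct (Rel_sirred t t1 HR Hi) as [H1 H2]. exists t1; repeat split; auto.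
    constructor.
  - destruct (Rel_step t t' t1 HR Hst) as [(t1x & H1 & H2) | (H1 & H2)]; auto.
    destruct (IH Hi t1x H2) as (t1' & S1 & S2 & S3).
    exists t1'; repeat split; auto. econstructor; eauto.
Qed.

Lemma sstar_sim_right t1 t1' : sstar t1 t1' -> sirred t1' -> forall t0, Rel t0 t1 ->
  exists t0', sstar t0 t0' /\ sirred t0' /\ nf_rel Rel t0' t1'.
Proof.
  intros H; induction H as [t|t t' t'' Hst Hs IH]; intros Hi t0 HR.
  - destruct (stutter_to_sirred (S (size t0)) t0 t ltac:(lia) HR Hi)
      as (t0' & S1 & S2 & S3).
    destruct (Rel_sirred t0' t S3 S2) as [H1 H2]. exists t0'; auto.
  - destruct (stutter_to_match (S (size t0)) t0 t t' ltac:(lia) HR Hst) as (t0x & S1 & S2).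
    destruct (IH Hi t0x S2) as (t0' & T1 & T2 & T3).
    exists t0'; repeat split; auto. eapply sstar_trans; eauto.
Qed.

Lemma stuttering_nf_bisimulation : nf_bisimulation Rel.
Proof.
  split.
  - intros t0 t1 t0' HR [Hs Hi].
    apply star_iff_sstar in Hs. apply irreducible_iff_sirred in Hi.
    destruct (sstar_sim_left t0 t0' Hs Hi t1 HR) as (t1' & S1 & S2 & S3).
    exists t1'. split; auto. split.
    + apply star_iff_sstar; auto.
    + apply irreducible_iff_sirred; auto.
  - intros t1 t0 t1' HR [Hs Hi].
    apply star_iff_sstar in Hs. apply irreducible_iff_sirred in Hi.
    destruct (sstar_sim_right t1 t1' Hs Hi t0 HR) as (t0' & S1 & S2 & S3).
    exists t0'. split; [split|].
    + apply star_iff_sstar; auto.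
    + apply irreducible_iff_sirred; auto.
    + apply nf_rel_flip; auto.
Qed.

End Stuttering.

Theorem proposition5 :
  forall (F : ectx) (t : term) (x : nat),
    pure F -> lc_ctx F -> lc t -> ~ In x (fv_ctx F) ->
    nf_bisim (Reset (App (Lam (close x (Reset (plug F (FVar x))))) t))
             (Reset (plug F t)).
Proof.
  intros F t x HF HlF Hlt Hx.
  exists adm_lc. split.
  - apply stuttering_nf_bisimulation; [exact adm_lc_step | exact adm_lc_sirred].
  - rewrite close_reset_plug; auto. split.
    + apply adm_redex; auto using adm_refl.
    + unfold lc; simpl. split; auto. apply lc_at_plug; simpl; auto.
Qed.
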